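(* Let $(M,g)$ be a spacetime with hyperbolic symmetry whose metric, on the covering manifold $\tilde M$, is written in areal coordinates $(t,\theta,x,y)$ as \[ ds^2=-e^{2\mu}dt^2+e^{2\lambda}d\theta^2+t^2\left(dx^2+\sinh^2x\,dy^2\right), \] with $\mu,\lambda$ functions of $(t,\theta)$ only, $t>0$. Let $f$ be a distribution function (number density of particles) on the mass shell, written in terms of the coordinates $(t,\theta,x,y)$ and the corresponding canonical momenta $(p^1,p^2,p^3)$ (with $p^0$ determined by the mass-shell condition). Assume that (the pull-back of) $f$ is invariant under the action on $T\tilde M$ induced by the action of $G$ on $\tilde M$. Then $f$ depends only on \[ t,\ \theta,\ p^1,\ (p^2)^2+\sinh^2x\,(p^3)^2 . \]
   Context: Hyperbolic symmetry: $M\cong\mathbb{R}\times S^1\times F$ with $F$ a compact orientable surface of genus $>1$; $\tilde M\cong \mathbb{R}\times S^1\times\tilde F$ is the covering obtained from the universal cover $\tilde F$ of $F$, identified with the hyperbolic plane. $G$ is the identity component of the isometry group of the hyperbolic plane; it acts on $\tilde M$ via its action on the $\tilde F$ factor (in the coordinates above, on the hyperbolic surfaces $\{t,\theta=\text{const}\}$ with metric $t^2(dx^2+\sinh^2x\,dy^2)$), and the metric and matter fields pulled back to $\tilde M$ are invariant under this action. The mass shell is $\{g_{\alpha\beta}p^\alpha p^\beta=-1,\ p^0>0\}$ (particles of unit rest mass); the canonical momenta $p^\alpha$ are the components of a tangent vector in the coordinate basis. *)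

From Stdlib Require Import Reals.
From mathcomp Require Import all_boot all_algebra.
From mathcomp Require Import Rstruct.
Set Implicit Arguments. Unset Strict Implicit. Unset Printing Implicit Defensive.
Import GRing.Theory Num.Theory.
Local Open Scope ring_scope.

(* Hyperboloid model of the hyperbolic plane (universal cover of F):
   points X in R^3 with <X,X> = -1, X_0 > 0, for the Minkowski form
   <u,v> = -u0 v0 + u1 v1 + u2 v2.  Its tangent vectors at X are the V
   with <X,V> = 0, and the hyperbolic metric is the restriction of <.,.>. *)
Definition i0 : 'I_3 := inord 0.
Definition i1 : 'I_3 := inord 1.
Definition i2 : 'I_3 := inord 2.

Definition mink (u v : 'cV[R]_3) : R :=
  - u i0 ord0 * v i0 ord0 + u i1 ord0 * v i1 ord0 + u i2 ord0 * v i2 ord0.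

Definition Jmx : 'M[R]_3 :=
  \matrix_(i, j) (if i == j then (if i == i0 then -1 else 1) else 0).

(* G = identity component of the isometry group of the hyperbolic plane,
   i.e. SO^+(2,1) acting linearly on the hyperboloid. *)
Definition in_G (A : 'M[R]_3) : Prop :=
  A^T *m Jmx *m A = Jmx /\ \det A = 1 /\ 0 < A i0 i0.

Definition on_hyperboloid (X : 'cV[R]_3) : Prop :=
  mink X X = -1 /\ 0 < X i0 ord0.

Definition tangent_at (X V : 'cV[R]_3) : Prop := mink X V = 0.

(* A point of T(tilde M) over (t,theta,X) with momentum
   p0 d_t + p1 d_theta + V (V tangent to the hyperbolic factor),
   lying on the mass shell g(p,p) = -1, p0 > 0, for the metric
   -e^{2mu} dt^2 + e^{2lam} dtheta^2 + t^2 (hyperbolic metric). *)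
Definition mass_shell (mu lam : R -> R -> R) (t th : R) (X : 'cV[R]_3)
    (p0 p1 : R) (V : 'cV[R]_3) : Prop :=
  0 < t /\ on_hyperboloid X /\ tangent_at X V /\
  - exp (2 * mu t th) * p0 ^+ 2 + exp (2 * lam t th) * p1 ^+ 2
    + t ^+ 2 * mink V V = -1 /\ 0 < p0.

(* Polar coordinates (x,y) on the hyperbolic plane: metric dx^2 + sinh^2 x dy^2. *)
Definition coord3 (a b c : R) : 'cV[R]_3 :=
  \col_i (if i == i0 then a else if i == i1 then b else c).

Definition polar (x y : R) : 'cV[R]_3 :=
  coord3 (cosh x) (sinh x * cos y) (sinh x * sin y).

(* The tangent vector p2 d_x + p3 d_y at polar x y. *)
Definition dpolar (x y p2 p3 : R) : 'cV[R]_3 :=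
  p2 *: coord3 (sinh x) (cosh x * cos y) (cosh x * sin y)
  + p3 *: coord3 0 (- (sinh x * sin y)) (sinh x * cos y).

From Stdlib Require Import Reals.
From mathcomp Require Import all_boot all_algebra.
From mathcomp Require Import Rstruct ring lra.
Import GRing.Theory Num.Theory.
Local Open Scope ring_scope.

(* G acts transitively on the tangent vectors of the hyperbolic plane of any
   given length: the element rot(y) boost(x) rot(c, s) carries the rest frame
   (e0, r e1) to the point (polar x y, dpolar x y p2 p3) as soon as
   (p2, sinh x * p3) = r (c, s), i.e. r^2 = p2^2 + sinh^2 x p3^2.
   Hence an invariant f equals its value at the rest frame, which depends on
   t, theta, p1, r and p0, and the mass shell condition expresses p0 through
   t, theta, p1 and r^2. *)

(* Arguments of type [R] are parsed in [R_scope], so terms such as [polar x y]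
   or [coord3 1 0 0] carry Stdlib's real operations and literals, which [ring]
   does not recognise; this rewrites them into ring operations. *)
Definition RstdE := (RplusE, RminusE, RmultE, RoppE, R0E, R1E).

Lemma IZR2E : IZR 2 = 2 :> R. Proof. by rewrite IZRposE INRE. Qed.

Lemma cosh2_sub_sinh2 (x : R) : cosh x ^+ 2 - sinh x ^+ 2 = 1.
Proof.
have E : exp x * exp (- x) = 1 by rewrite -RmultE -exp_plus Rplus_opp_r exp_0.
by rewrite /cosh /sinh !RdivE IZR2E RplusE RminusE -[RHS]E; field.
Qed.

Lemma cosh_gt0 (x : R) : 0 < cosh x.
Proof.
have /RltP ex := exp_pos x; have /RltP emx := exp_pos (- x).
by rewrite /cosh RdivE IZR2E RplusE divr_gt0 ?addr_gt0.
Qed.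

Lemma cos2_add_sin2 (y : R) : cos y ^+ 2 + sin y ^+ 2 = 1.
Proof. by rewrite addrC; exact: sin2_cos2. Qed.

Lemma polar_decomposition {F : rcfType} (a b : F) :
  exists c s, [/\ c ^+ 2 + s ^+ 2 = 1, c * Num.sqrt (a ^+ 2 + b ^+ 2) = a
                & s * Num.sqrt (a ^+ 2 + b ^+ 2) = b].
Proof.
set r := Num.sqrt _.
have r2 : r ^+ 2 = a ^+ 2 + b ^+ 2 by rewrite sqr_sqrtr ?addr_ge0 ?sqr_ge0.
have [r0 | rn0] := eqVneq r 0.
  by exists 1, 0; rewrite r0 !mulr0 expr1n expr0n addr0; split => //; nra.
exists (a / r), (b / r); rewrite !divfK //; split => //.
by rewrite !expr_div_n -mulrDl -r2 divff // expf_neq0.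
Qed.

Lemma ord3E : (i0 = @Ordinal 3 0 isT) * (i1 = @Ordinal 3 1 isT) * (i2 = @Ordinal 3 2 isT).
Proof. by do !split; apply/val_inj; rewrite /= inordK. Qed.

Lemma ord3P (i : 'I_3) : [\/ i = i0, i = i1 | i = i2].
Proof.
rewrite !ord3E; case: i => -[|[|[|//]]] ?;
  [constructor 1 | constructor 2 | constructor 3]; exact/val_inj.
Qed.

Lemma sum3 (V : nmodType) (F : 'I_3 -> V) : \sum_(k < 3) F k = F i0 + F i1 + F i2.
Proof.
rewrite !big_ord_recl big_ord0 addr0 addrA !ord3E.
by congr (F _ + F _ + F _); apply/val_inj.
Qed.

Lemma coord3E a b c :
  (coord3 a b c i0 ord0 = a) * (coord3 a b c i1 ord0 = b) * (coord3 a b c i2 ord0 = c).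
Proof. by rewrite !mxE !ord3E. Qed.

Lemma coord3P (u v : 'cV[R]_3) :
  u i0 ord0 = v i0 ord0 -> u i1 ord0 = v i1 ord0 -> u i2 ord0 = v i2 ord0 -> u = v.
Proof.
move=> ? ? ?; apply/matrixP => i j; rewrite (ord1 j).
by have [->|->|->] := ord3P i.
Qed.

Lemma scale_coord3 r a b c : r *: coord3 a b c = coord3 (r * a)%R (r * b)%R (r * c)%R.
Proof. by apply: coord3P; rewrite [LHS]mxE !coord3E. Qed.

Lemma add_coord3 a b c a' b' c' :
  coord3 a b c + coord3 a' b' c' = coord3 (a + a')%R (b + b')%R (c + c')%R.
Proof. by apply: coord3P; rewrite [LHS]mxE !coord3E. Qed.

Lemma mink_coord3 a b c a' b' c' :
  mink (coord3 a b c) (coord3 a' b' c') = - a * a' + b * b' + c * c'.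
Proof. by rewrite /mink !coord3E. Qed.

Definition M3 (a b c d e f g h k : R) : 'M[R]_3 :=
  \matrix_(i, j) nth 0 (nth [::] [:: [:: a; b; c]; [:: d; e; f]; [:: g; h; k]] i) j.
Arguments M3 (a b c d e f g h k)%_ring_scope.

Lemma det_M3 a b c d e f g h k :
  \det (M3 a b c d e f g h k) = a * (e * k - f * h) - b * (d * k - f * g) + c * (d * h - e * g).
Proof.
rewrite (expand_det_row _ ord0) !big_ord_recl big_ord0 /cofactor.
by rewrite !(expand_det_row _ ord0) !big_ord_recl !big_ord0 /cofactor !det_mx11 !mxE /=; ring.
Qed.

Lemma mulmx_M3_coord3 a b c d e f g h k u v w :
  M3 a b c d e f g h k *m coord3 u v w =
  coord3 (a * u + b * v + c * w)%R (d * u + e * v + f * w)%R (g * u + h * v + k * w)%R.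
Proof. by apply: coord3P; rewrite [LHS]mxE sum3 !coord3E !mxE !ord3E. Qed.

Lemma Jmx_M3 : Jmx = M3 (-1) 0 0 0 1 0 0 0 1.
Proof.
apply/matrixP => i j; rewrite !mxE.
by have [->|->|->] := ord3P i; have [->|->|->] := ord3P j; rewrite !ord3E.
Qed.

Lemma trmx_Jmx_M3 a b c d e f g h k (A := M3 a b c d e f g h k) :
  A^T *m Jmx *m A =
  M3 (- a * a + d * d + g * g) (- a * b + d * e + g * h) (- a * c + d * f + g * k)
     (- b * a + e * d + h * g) (- b * b + e * e + h * h) (- b * c + e * f + h * k)
     (- c * a + f * d + k * g) (- c * b + f * e + k * h) (- c * c + f * f + k * k).
Proof.
rewrite Jmx_M3; apply/matrixP => i j; rewrite !mxE sum3 !mxE !sum3 !mxE !ord3E.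
by have [->|->|->] := ord3P i; have [->|->|->] := ord3P j; rewrite !ord3E /=; ring.
Qed.

Definition is_lorentz (A : 'M[R]_3) : Prop := A^T *m Jmx *m A = Jmx.

Lemma is_lorentz_mul A B : is_lorentz A -> is_lorentz B -> is_lorentz (A *m B).
Proof.
rewrite /is_lorentz => LA LB.
by rewrite trmx_mul -!mulmxA (mulmxA Jmx) (mulmxA A^T _ B) (mulmxA A^T) LA !mulmxA.
Qed.

Definition rot (c s : R) : 'M[R]_3 := M3 1 0 0 0 c (- s) 0 s c.
Definition boost (ch sh : R) : 'M[R]_3 := M3 ch sh 0 sh ch 0 0 0 1.

Lemma rot_lorentz (c s : R) : c ^+ 2 + s ^+ 2 = 1 -> is_lorentz (rot c s).
Proof.
move=> cs; rewrite /is_lorentz trmx_Jmx_M3 Jmx_M3.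
by congr M3; first [ring | rewrite -cs; ring].
Qed.

Lemma det_rot (c s : R) : c ^+ 2 + s ^+ 2 = 1 -> \det (rot c s) = 1.
Proof. by move=> cs; rewrite det_M3 -[RHS]cs; ring. Qed.

Lemma boost_lorentz (ch sh : R) : ch ^+ 2 - sh ^+ 2 = 1 -> is_lorentz (boost ch sh).
Proof.
move=> chsh; rewrite /is_lorentz trmx_Jmx_M3 Jmx_M3.
by congr M3; first [ring | rewrite -chsh; ring].
Qed.

Lemma det_boost (ch sh : R) : ch ^+ 2 - sh ^+ 2 = 1 -> \det (boost ch sh) = 1.
Proof. by move=> chsh; rewrite det_M3 -[RHS]chsh; ring. Qed.

Definition frame (x y c s : R) : 'M[R]_3 :=
  rot (cos y) (sin y) *m boost (cosh x) (sinh x) *m rot c s.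

Lemma frame_e0 (x y c s : R) : frame x y c s *m coord3 1 0 0 = polar x y.
Proof.
rewrite /frame /rot /boost -!mulmxA !mulmx_M3_coord3 /polar !RstdE.
by congr coord3; ring.
Qed.

Lemma frame_e1 (x y c s r p2 p3 : R) : c * r = p2 -> s * r = sinh x * p3 ->
  frame x y c s *m coord3 0 r 0 = dpolar x y p2 p3.
Proof.
move=> cr sr; rewrite /frame /rot /boost -!mulmxA !mulmx_M3_coord3.
rewrite /dpolar !scale_coord3 add_coord3 !RstdE.
by congr coord3; rewrite cr sr; ring.
Qed.

Lemma frame_in_G (x y c s : R) : c ^+ 2 + s ^+ 2 = 1 -> in_G (frame x y c s).
Proof.
move=> cs; split.
  apply: is_lorentz_mul; last exact: rot_lorentz.
  exact: is_lorentz_mul (rot_lorentz _ _ (cos2_add_sin2 y)) (boost_lorentz _ _ (cosh2_sub_sinh2 x)).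
split.
  by rewrite !det_mulmx det_rot ?cos2_add_sin2 // det_boost ?cosh2_sub_sinh2 // det_rot // !mulr1.
have -> : frame x y c s i0 i0 = (frame x y c s *m coord3 1 0 0) i0 ord0.
  by rewrite [RHS]mxE sum3 !coord3E !RstdE; ring.
by rewrite frame_e0 coord3E cosh_gt0.
Qed.

Lemma frame_to_polar (x y p2 p3 : R) :
  exists A, [/\ in_G A, A *m coord3 1 0 0 = polar x y
              & A *m coord3 0 (Num.sqrt (p2 ^+ 2 + sinh x ^+ 2 * p3 ^+ 2)) 0 = dpolar x y p2 p3].
Proof.
have [c [s [cs cr sr]]] := polar_decomposition p2 (sinh x * p3).
exists (frame x y c s); split; [exact: frame_in_G | exact: frame_e0 | ].
by apply: frame_e1; rewrite -?exprMn.
Qed.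

Lemma mink_dpolar (x y p2 p3 : R) :
  mink (dpolar x y p2 p3) (dpolar x y p2 p3) = p2 ^+ 2 + sinh x ^+ 2 * p3 ^+ 2.
Proof.
rewrite /dpolar !scale_coord3 add_coord3 mink_coord3 !RstdE.
transitivity (p2 ^+ 2 * (cosh x ^+ 2 * (cos y ^+ 2 + sin y ^+ 2) - sinh x ^+ 2)
              + sinh x ^+ 2 * p3 ^+ 2 * (cos y ^+ 2 + sin y ^+ 2)); first ring.
by rewrite cos2_add_sin2 !mulr1 cosh2_sub_sinh2 mulr1.
Qed.

Definition shell_energy (mu lam : R -> R -> R) (t th p1 q : R) : R :=
  Num.sqrt ((1 + exp (2 * lam t th) * p1 ^+ 2 + t ^+ 2 * q) / exp (2 * mu t th)).

Lemma mass_shell_energy {mu lam t th X p0 p1 V} :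
  mass_shell mu lam t th X p0 p1 V -> p0 = shell_energy mu lam t th p1 (mink V V).
Proof.
case=> _ [_ [_ [shell p0_gt0]]].
have /RltP/lt0r_neq0 emu := exp_pos (2 * mu t th).
rewrite /shell_energy.
have -> : 1 + exp (2 * lam t th) * p1 ^+ 2 + t ^+ 2 * mink V V = exp (2 * mu t th) * p0 ^+ 2.
  by lra.
by rewrite [_ * p0 ^+ 2]mulrC mulfK // sqrtr_sqr gtr0_norm.
Qed.

Lemma mass_shell_rest_frame {mu lam t th X p0 p1 V} (r : R) :
  mass_shell mu lam t th X p0 p1 V -> mink V V = r ^+ 2 ->
  mass_shell mu lam t th (coord3 1 0 0) p0 p1 (coord3 0 r 0).
Proof.
case=> t_gt0 [_ [_ [shell p0_gt0]]] VV.
rewrite /mass_shell /on_hyperboloid /tangent_at !mink_coord3 coord3E !RstdE -shell VV.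
by do !split => //; ring.
Qed.

Theorem lemma1 (mu lam : R -> R -> R)
  (f : R -> R -> 'cV[R]_3 -> R -> R -> 'cV[R]_3 -> R) :
  (forall A : 'M[R]_3, in_G A ->
     forall t th X p0 p1 V, mass_shell mu lam t th X p0 p1 V ->
       f t th (A *m X) p0 p1 (A *m V) = f t th X p0 p1 V) ->
  exists h : R -> R -> R -> R -> R,
    forall t th x y p0 p1 p2 p3, 0 < x ->
      mass_shell mu lam t th (polar x y) p0 p1 (dpolar x y p2 p3) ->
      f t th (polar x y) p0 p1 (dpolar x y p2 p3)
        = h t th p1 (p2 ^+ 2 + sinh x ^+ 2 * p3 ^+ 2).
Proof.
move=> f_inv.
exists (fun t th p1 q =>
  f t th (coord3 1 0 0) (shell_energy mu lam t th p1 q) p1 (coord3 0 (Num.sqrt q) 0)).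
move=> t th x y p0 p1 p2 p3 _ shell.
have [A [GA AX AV]] := frame_to_polar x y p2 p3.
have q_ge0 : 0 <= p2 ^+ 2 + sinh x ^+ 2 * p3 ^+ 2.
  by apply: addr_ge0; [|apply: mulr_ge0]; apply: sqr_ge0.
rewrite -AX -AV f_inv //.
  by rewrite (mass_shell_energy shell) mink_dpolar.
by apply: mass_shell_rest_frame shell _; rewrite mink_dpolar sqr_sqrtr.
Qed.
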